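(* Let $\mathcal{M}=(\mathcal{S},\mathcal{A},P,r,\gamma,\mu)$ be an MDP with finite state and action spaces, $\gamma\in[0,1)$ and initial state-action distribution $\mu$, and let $\pi$ be a fixed stationary policy. For a state-action pair $(s,a)$ and $k\in\mathbb{N}$, let $p_k(s,a)$ be the probability that $(s_k,a_k)=(s,a)$ when $(s_0,a_0)\sim d^\pi$ and the process evolves by $s_{j+1}\sim P(\cdot|s_j,a_j)$, $a_{j+1}\sim\pi(\cdot|s_{j+1})$. Then for every $k\in\mathbb{N}$ and every $(s,a)$ with $\mu(s,a)>0$, \[\frac{p_k(s,a)}{d^\pi(s,a)}\le\frac{1}{(1-\gamma)\mu(s,a)}.\]
   Context: $d^\pi(s,a)=(1-\gamma)\sum_{t\ge0}\gamma^t\mathbb{P}(s_t=s,a_t=a;\pi,\mu)$, where $(s_0,a_0)\sim\mu$ and subsequent states and actions follow $P$ and $\pi$. *)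

From HB Require Import structures.
From mathcomp Require Import all_boot all_order all_algebra.
From mathcomp Require Import all_classical all_reals all_analysis.
Set Implicit Arguments. Unset Strict Implicit. Unset Printing Implicit Defensive.
Import Order.TTheory GRing.Theory Num.Theory.
Local Open Scope ring_scope.

(* A finite MDP: states S, actions A (finTypes), transition kernel
   P s a s' = P(s'|s,a), stationary policy pi s a = pi(a|s),
   state-action distributions as functions S -> A -> R. *)

Definition is_distr (R : realType) (T : finType) (p : T -> R) : Prop :=
  (forall x, 0 <= p x) /\ \sum_(x : T) p x = 1.

Definition is_distr2 (R : realType) (S A : finType) (q : S -> A -> R) : Prop :=
  (forall s a, 0 <= q s a) /\ \sum_(s : S) \sum_(a : A) q s a = 1.

Definition sa_step (R : realType) (S A : finType)
  (P : S -> A -> S -> R) (pi : S -> A -> R) (q : S -> A -> R) : S -> A -> R :=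
  fun s' a' => \sum_(s : S) \sum_(a : A) q s a * P s a s' * pi s' a'.

Definition sa_law (R : realType) (S A : finType)
  (P : S -> A -> S -> R) (pi : S -> A -> R) (q0 : S -> A -> R) (t : nat)
  : S -> A -> R := iter t (sa_step P pi) q0.

Definition occupancy (R : realType) (S A : finType)
  (P : S -> A -> S -> R) (pi : S -> A -> R) (gamma : R) (mu : S -> A -> R)
  : S -> A -> R :=
  fun s a => (1 - gamma) *
    limn (fun n => \sum_(0 <= t < n) gamma ^+ t * sa_law P pi mu t s a).

From HB Require Import structures.
From mathcomp Require Import all_boot all_order all_algebra.
From mathcomp Require Import all_classical all_reals all_analysis.
Import Order.TTheory GRing.Theory Num.Theory.
Import numFieldTopology.Exports numFieldNormedType.Exports.
Local Open Scope ring_scope.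
Local Open Scope classical_set_scope.

(* The state-action chain preserves nonnegativity and total mass, and the
   occupancy measure d has total mass at most one, so the law p_k of the chain
   started from d satisfies p_k(s,a) <= 1.  On the other hand the t = 0 term of
   the discounted series gives d(s,a) >= (1 - gamma) mu(s,a).  Hence
   p_k(s,a) / d(s,a) <= 1 / d(s,a) <= 1 / ((1 - gamma) mu(s,a)). *)

Section DiscountedSeries.
Context {R : realType} {g : R}.
Hypotheses (g_ge0 : 0 <= g) (g_lt1 : g < 1).

Lemma geometric_series_le n : series (geometric 1 g) n <= (1 - g)^-1.
Proof.
rewrite geometric_seriesE ?lt_eqF //= mul1r -[leRHS]mul1r.
by rewrite ler_wpM2r ?gerBl ?exprn_ge0 // invr_ge0 subr_ge0 ltW.
Qed.

Context {u : R^nat}.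
Hypothesis u01 : forall t, 0 <= u t <= 1.

Let discounted_ge0 t : 0 <= g ^+ t * u t.
Proof. by rewrite mulr_ge0 ?exprn_ge0 //; case/andP: (u01 t). Qed.

Lemma is_cvg_discounted_series : cvgn (series (fun t => g ^+ t * u t)).
Proof.
apply: (@series_le_cvg _ _ (geometric 1 g)) => // [t|t|].
- by rewrite geometric_ge0.
- by rewrite /= mul1r ler_piMr ?exprn_ge0 //; case/andP: (u01 t).
- by apply: is_cvg_geometric_series; rewrite ger0_norm.
Qed.

Lemma discounted_series_ge_head : u 0%N <= limn (series (fun t => g ^+ t * u t)).
Proof.
have := nondecreasing_cvgn_le
  (nondecreasing_series (fun t _ _ => discounted_ge0 t)) is_cvg_discounted_series 1.
by rewrite /series /= big_nat1 expr0 mul1r.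
Qed.

End DiscountedSeries.

Lemma cvgn_sumr {R : realType} {I : Type} (r : seq I) (u : I -> R^nat) :
  (forall i, cvgn (u i)) ->
  (fun n => \sum_(i <- r) u i n) @ \oo --> \sum_(i <- r) limn (u i).
Proof. by move=> u_cvg; apply: cvg_big => //; exact: add_continuous. Qed.

Definition sa_mass {R : realType} {S A : finType} (q : S -> A -> R) : R :=
  \sum_s \sum_a q s a.

Lemma le_sa_mass {R : realType} {S A : finType} (q : S -> A -> R) s a :
  (forall s a, 0 <= q s a) -> q s a <= sa_mass q.
Proof.
move=> q_ge0; rewrite /sa_mass (bigD1 s) //= (bigD1 a) //= -addrA lerDl.
by rewrite addr_ge0 ?sumr_ge0 // => s' _; rewrite sumr_ge0.
Qed.

Section StateActionChain.
Context {R : realType} {S A : finType} {P : S -> A -> S -> R} { pi : S -> A -> R }.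
Hypotheses (P_distr : forall s a, is_distr (P s a)) (pi_distr : forall s, is_distr (pi s)).

Lemma sa_step_ge0 q : (forall s a, 0 <= q s a) -> forall s a, 0 <= sa_step P pi q s a.
Proof.
move=> q_ge0 s' a'; apply: sumr_ge0 => s _; apply: sumr_ge0 => a _.
by rewrite !mulr_ge0 //; [case: (P_distr s a) | case: (pi_distr s')].
Qed.

Lemma sa_mass_step q : sa_mass (sa_step P pi q) = sa_mass q.
Proof.
rewrite /sa_mass /sa_step.
under eq_bigr => s' _ do rewrite exchange_big /=.
rewrite exchange_big /=.
under eq_bigr => s _ do (under eq_bigr => s' _ do rewrite exchange_big /=).
under eq_bigr => s _ do rewrite exchange_big /=.
apply: eq_bigr => s _; apply: eq_bigr => a _.
under eq_bigr => s' _ do rewrite -mulr_sumr (proj2 (pi_distr s')) mulr1.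
by rewrite -mulr_sumr (proj2 (P_distr s a)) mulr1.
Qed.

Lemma sa_law_ge0 q t :
  (forall s a, 0 <= q s a) -> forall s a, 0 <= sa_law P pi q t s a.
Proof. by move=> q_ge0; elim: t => [|t IHt] //=; exact: sa_step_ge0. Qed.

Lemma sa_mass_law q t : sa_mass (sa_law P pi q t) = sa_mass q.
Proof. by elim: t => [|t IHt] //=; rewrite sa_mass_step. Qed.

Lemma sa_law_le_mass q t s a :
  (forall s a, 0 <= q s a) -> sa_law P pi q t s a <= sa_mass q.
Proof. by move=> q_ge0; rewrite -(sa_mass_law q t); exact/le_sa_mass/sa_law_ge0. Qed.

Context {gamma : R} {mu : S -> A -> R}.
Hypotheses (gamma_ge0 : 0 <= gamma) (gamma_lt1 : gamma < 1) (mu_distr : is_distr2 mu).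

Let discounted s a := series (fun t => gamma ^+ t * sa_law P pi mu t s a).

Let law01 s a t : 0 <= sa_law P pi mu t s a <= 1.
Proof.
case: mu_distr => mu_ge0 mu_mass.
by rewrite sa_law_ge0 //= -mu_mass sa_law_le_mass.
Qed.

Lemma occupancy_ge s a : (1 - gamma) * mu s a <= occupancy P pi gamma mu s a.
Proof.
apply: ler_wpM2l; first by rewrite subr_ge0 ltW.
exact: (discounted_series_ge_head gamma_ge0 gamma_lt1 (law01 s a) : mu s a <= _).
Qed.

Lemma occupancy_ge0 s a : 0 <= occupancy P pi gamma mu s a.
Proof.
apply: le_trans (occupancy_ge s a).
by rewrite mulr_ge0 ?subr_ge0 ?(ltW gamma_lt1) //; case: mu_distr.
Qed.

Let sa_mass_discounted n : sa_mass (fun s a => discounted s a n) = series (geometric 1 gamma) n.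
Proof.
rewrite /sa_mass /discounted /series /=.
under eq_bigr do rewrite exchange_big /=.
rewrite exchange_big /=; apply: eq_bigr => t _.
rewrite /geometric mul1r -[RHS]mulr1 -(proj2 mu_distr) -/(sa_mass mu).
rewrite -(sa_mass_law _ t) /sa_mass mulr_sumr.
by apply: eq_bigr => s _; rewrite mulr_sumr.
Qed.

Lemma sa_mass_occupancy_le1 : sa_mass (occupancy P pi gamma mu) <= 1.
Proof.
have gamma_gt0 : 0 < 1 - gamma by rewrite subr_gt0.
have -> : sa_mass (occupancy P pi gamma mu) =
          (1 - gamma) * sa_mass (fun s a => limn (discounted s a)).
  by rewrite /sa_mass mulr_sumr; apply: eq_bigr => s _; rewrite mulr_sumr.
rewrite -ler_pdivlMl // mulr1.
have cvg_s s a : cvgn (discounted s a).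
  exact: (is_cvg_discounted_series gamma_ge0 gamma_lt1 (law01 s a)).
have cvg_mass : (fun n => sa_mass (fun s a => discounted s a n)) @ \oo -->
                sa_mass (fun s a => limn (discounted s a)).
  rewrite /sa_mass; under [X in _ --> X]eq_bigr => s _ do
    rewrite -(cvg_lim _ (cvgn_sumr _ _ (cvg_s s))) //.
  apply: cvgn_sumr => s; apply/cvg_ex; eexists; exact: cvgn_sumr.
rewrite -(cvg_lim _ cvg_mass) //; apply: limr_le; first exact: cvgP cvg_mass.
apply: nearW => n; rewrite sa_mass_discounted.
exact: geometric_series_le.
Qed.

End StateActionChain.

Theorem lemma3 (R : realType) (S A : finType)
  (P : S -> A -> S -> R) (pi : S -> A -> R) (gamma : R) (mu : S -> A -> R) :
  (forall s a, is_distr (P s a)) ->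
  (forall s, is_distr (pi s)) ->
  is_distr2 mu ->
  0 <= gamma -> gamma < 1 ->
  forall (k : nat) (s : S) (a : A), 0 < mu s a ->
    sa_law P pi (occupancy P pi gamma mu) k s a / occupancy P pi gamma mu s a
    <= 1 / ((1 - gamma) * mu s a).
Proof.
move=> P_distr pi_distr mu_distr gamma_ge0 gamma_lt1 k s a mu_gt0.
set d := occupancy P pi gamma mu.
have d_ge0 := occupancy_ge0 P_distr pi_distr gamma_ge0 gamma_lt1 mu_distr.
have lower_gt0 : 0 < (1 - gamma) * mu s a by rewrite mulr_gt0 ?subr_gt0.
have d_ge := occupancy_ge P_distr pi_distr gamma_ge0 gamma_lt1 mu_distr s a.
have d_gt0 : 0 < d s a := lt_le_trans lower_gt0 d_ge.
have law_le1 : sa_law P pi d k s a <= 1.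
  apply: le_trans (sa_law_le_mass P_distr pi_distr d k s a d_ge0) _.
  exact: (sa_mass_occupancy_le1 P_distr pi_distr gamma_ge0 gamma_lt1 mu_distr).
apply: (@le_trans _ _ (1 / d s a)).
  by rewrite ler_wpM2r // invr_ge0 ltW.
by rewrite !mul1r lef_pV2 // posrE.
Qed.
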